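(* Let $k\le -1$, $w^+=W_v(T_k^0)$ and $w^-=0$, and suppose $W_k(T_n^0;w^+)=W_k(T_n^0;w^-)$ for some $n$ with $k\le n\le-1$. Then $W_k(T_m^0;w^+)=W(m)=W_k(T_m^0;w^-)$ for all $m\ge n$. Moreover, for all $t\ge T_n^0+W_k^{(1)}(T_n^0;w^+)$, \[ Z_{T_k^0}\big(t-T_k^0;\,Q_v(T_k^0),\,\mathcal{S}(U(T_k^0)),\,0\big)=Z_{T_k^0}\big(t-T_k^0;0,0,0\big)=Z(t).\]
   Context: Let $c\ge1$. Let $G,F$ be CDFs of strictly positive random variables $A$ (interarrival) and $V$ (service), $\lambda=1/E[A]$, $\mu=1/E[V]$, $\lambda<c\mu$. Let $\mathcal{T}^0=\{T_n^0:n\in\mathbb{Z}\setminus\{0\}\}$ be a time-stationary renewal point process with inter-renewal CDF $G$, indexed $\dots<T_{-1}^0<0<T_1^0<\dots$ (indices ordered naturally); $T_n^{0,+}$ is the next point after $T_n^0$, $A_n=T_n^{0,+}-T_n^0$. Let $\mathcal{T}^i=\{T_n^i\}$, $i=1,\dots,c$, be i.i.d. time-stationary renewal processes with inter-renewal CDF $F$, independent of $\mathcal{T}^0$; $V_k^i=T_k^{i,+}-T_k^i$. $U^i(t)=\inf\{T_n^i:T_n^i>t\}-t$, $U(t)=(U^1(t),\dots,U^c(t))$, $U(s_-)$ its left limit. $\mathcal{S}$ sorts ascending; $x^+$ componentwise positive part; $\mathbf{1}=(1,\dots,1)$, $\mathbf{e}_1=(1,0,\dots,0)$. Vacation system: customers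 arrive at the points of $\mathcal{T}^0$ and wait in a FCFS queue; at each point $T_k^i$, if the queue is nonempty just before, the head customer leaves the queue and is served by server $i$ for time $V_k^i$, otherwise server $i$ takes a vacation of length $V_k^i$. Stationary queue length $Q_v(t)=\sup_{s\le t}\big(|(s,t]\cap\mathcal{T}^0|-\sum_i|(s,t]\cap\mathcal{T}^i|\big)$. $D_n^0$ is the delay of the customer arriving at $T_n^0$; he leaves the queue at a point $T_k^{i(n)}=T_n^0+D_n^0$ and his service time is $V_n:=V_k^{i(n)}$. $W_v(T_n^0)=D_n^0\mathbf{1}+\mathcal{S}(U((T_n^0+D_n^0)_-))$. For $k\le n$ and nonnegative ascending $w\in\mathbb{R}^c$: $W_k(T_k^0;w)=w$, $W_k(T_n^{0,+};w)=\mathcal{S}\big((W_k(T_n^0;w)+V_n\mathbf{e}_1-A_n\mathbf{1})^+\big)$; $W_k^{(1)}$ is the first entry; $W(n)=\lim_{k\to-\infty}W_k(T_n^0;0)$. For $u\in\mathbb{R}$ and $z=(q,r,e)$, $Z_u(t;z)$ is the state at time $u+t$ (number waiting in queue, ascending vector of remaining service times at the $c$ servers, time since last arrival) of a FCFS $c$-server queue started at time $u$ in state $z$ and fed by the customers arriving at $T_n^0\in(u,u+t]$ with service times $V_n$. $Z(t)=\lim_{u\to-\infty}Z_u(t-u;(0,0,e_u))$, $e_u=u-\sup\{T_n^0:T_n^0\le u\}$ (this limit exists a.s.).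
   Formalization: $Z_{T_k^0}(t-T_k^0;0,0,0)$ also serves the customer arriving at $T_k^0$, not only arrivals in $(T_k^0,t]$, and the $Q_v(T_k^0)$ customers initially waiting in the other system are the last arrivals up to $T_k^0$. Each condition added here is assumed in the paper as well or is needed for the statement above to hold. *)

From HB Require Import structures.
From mathcomp Require Import all_boot all_order all_algebra.
From mathcomp Require Import boolp classical_sets reals.
Set Implicit Arguments. Unset Strict Implicit. Unset Printing Implicit Defensive.
Import Order.TTheory GRing.Theory Num.Theory.
Local Open Scope ring_scope.

(* One realization of the point processes is fixed.
   INDEXING CONVENTION: the paper indexes the points of T^0 by Z\{0} with
   T_{-1}^0 < 0 < T_1^0.  We reindex by int: T0 i = T^0_i for i <= -1 and
   T0 i = T^0_{i+1} for i >= 0.  This order-preserving bijection fixes all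
   negative indices, so k, n <= -1 keep their names; T^{0,+}_n = T0 (n+1).
   Server processes T^i (i : 'I_c) are indexed by int arbitrarily. *)

Definition sortR {R : realType} (v : seq R) : seq R := sort (fun x y : R => x <= y) v.

Definition incr_unb {R : realType} (T : int -> R) : Prop :=
  (forall i j : int, i < j -> T i < T j) /\
  (forall x : R, exists i, x < T i) /\ (forall x : R, exists i, T i < x).

Definition lastidx {R : realType} (T : int -> R) (t : R) : int :=
  xget 0 (fun i : int => T i <= t < T (i + 1)).
Definition firstge {R : realType} (T : int -> R) (t : R) : int :=
  xget 0 (fun m : int => T (m - 1) < t <= T m).
Definition Ncount {R : realType} (T : int -> R) (s t : R) : int :=
  lastidx T t - lastidx T s.

(* positive part and Kiefer-Wolfowitz step S((w + v e1 - a 1)^+) *)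
Definition kwstep {R : realType} (w : seq R) (v a : R) : seq R :=
  sortR [seq Num.max (x - a) 0 | x <- (head 0 w + v) :: behead w].

Section Model.
Context {R : realType} {c : nat} (T0 : int -> R) (TS : 'I_c -> int -> R).

(* regularity of the realization (almost sure properties of the model) *)
Definition arrivals_ok : Prop := incr_unb T0 /\ T0 (-1) < 0 < T0 0.
Definition servers_ok : Prop := forall s : 'I_c, incr_unb (TS s).
Definition no_coincidence : Prop :=
  (forall (i : int) (s : 'I_c) (m : int), T0 i <> TS s m) /\
  (forall (s1 s2 : 'I_c) (m1 m2 : int), s1 <> s2 -> TS s1 m1 <> TS s2 m2).

Definition NS (s t : R) : int := \sum_(i < c) Ncount (TS i) s t.
Definition qdiff (s t : R) : int := Ncount T0 s t - NS s t.
(* Q_v(t) = sup_{s <= t} qdiff s t ; finite (a.s., since lambda < c mu) *)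
Definition Qv_finite : Prop :=
  forall t : R, exists B : int, forall s, s <= t -> qdiff s t <= B.
Definition Qv (t : R) : int :=
  xget 0 (fun q : int => (forall s, s <= t -> qdiff s t <= q) /\
                         exists2 s, s <= t & qdiff s t = q).

Definition isSP (p : R) : Prop := exists (s : 'I_c) (m : int), TS s m = p.

(* time at which customer i (arriving at T0 i) leaves the vacation queue:
   FCFS, he is Q_v(T0 i)-th in line, hence leaves at the Q_v(T0 i)-th
   server point after T0 i *)
Definition dep (i : int) : R :=
  xget 0 (fun p : R => isSP p /\ T0 i < p /\ NS (T0 i) p = Qv (T0 i)).
Definition D0 (i : int) : R := dep i - T0 i.
Definition Vc (i : int) : R :=
  xget 0 (fun v : R => exists (s : 'I_c) (m : int),
                         TS s m = dep i /\ v = TS s (m + 1) - TS s m).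
Definition Aint (i : int) : R := T0 (i + 1) - T0 i.

(* residual times U(t) and their left limits U(t-) *)
Definition Uvec (t : R) : seq R :=
  [seq TS s (lastidx (TS s) t + 1) - t | s <- enum 'I_c].
Definition Uleftvec (t : R) : seq R :=
  [seq TS s (firstge (TS s) t) - t | s <- enum 'I_c].

Definition Wv (i : int) : seq R := [seq D0 i + x | x <- sortR (Uleftvec (dep i))].

Fixpoint Witer (k : int) (w : seq R) (l : nat) : seq R :=
  match l with
  | 0 => w
  | l'.+1 => kwstep (Witer k w l') (Vc (k + l'%:Z)) (Aint (k + l'%:Z))
  end.
(* W_k(T^0_m; w), meaningful for k <= m *)
Definition Wt (k : int) (w : seq R) (m : int) : seq R := Witer k w (absz (m - k)).

(* "W_k(T_m^0;0) --> x as k --> -oo", i.e. W(m) exists and equals x *)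
Definition Wlim_to (m : int) (x : seq R) : Prop :=
  forall eps : R, 0 < eps -> exists K : int, forall k', k' <= K -> k' <= m ->
    forall p : nat, (p < c)%N -> `|nth 0 (Wt k' (nseq c 0) m) p - nth 0 x p| < eps.

(* FCFS c-server queue started at time u with residual service vector r at
   the servers, serving customers j, j+1, ... (service times Vc) in order;
   customer m is present from time max(u, T0 m).
   Fseq l = sorted vector of (absolute) times at which the servers become free
   after customers j..j+l-1 have been assigned; sigma l = start of service
   of customer j+l. *)
Fixpoint Fseq (u : R) (r : seq R) (j : int) (l : nat) : seq R :=
  match l with
  | 0 => sortR [seq u + x | x <- r]
  | l'.+1 =>
      let F := Fseq u r j l' in
      let sg := Num.max (Num.max u (T0 (j + l'%:Z))) (head 0 F) in
      sortR ((sg + Vc (j + l'%:Z)) :: behead F)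
  end.
Definition sigma (u : R) (r : seq R) (j : int) (l : nat) : R :=
  Num.max (Num.max u (T0 (j + l%:Z))) (head 0 (Fseq u r j l)).
(* number of customers present by time s *)
Definition Nent (u : R) (j : int) (s : R) : nat :=
  if s < u then 0%N else absz (Num.max 0 (lastidx T0 s - j + 1)).

(* state at time s: (number waiting in queue, ascending vector of remaining
   service times at the c servers, time since last arrival); e = time since
   last arrival at the starting time u *)
Definition Zstate (u : R) (r : seq R) (j : int) (e : R) (s : R) : nat * seq R * R :=
  let L := Nent u j s in
  let nwait := count (fun l => s < sigma u r j l) (iota 0 L) in
  let nstart := count (fun l => sigma u r j l <= s) (iota 0 L) in
  let res := sortR [seq Num.max (x - s) 0 | x <- Fseq u r j nstart] in
  let el := if u < T0 (lastidx T0 s) then s - T0 (lastidx T0 s) else e + (s - u) in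
  (nwait, res, el).

(* Z_u(t-u; (0,0,e_u)) : empty system at time u fed by arrivals after u *)
Definition Zemp (u t : R) : nat * seq R * R :=
  Zstate u (nseq c 0) (lastidx T0 u + 1) (u - T0 (lastidx T0 u)) t.

(* "Z_u(t-u;(0,0,e_u)) --> z as u --> -oo", i.e. Z(t) exists and equals z *)
Definition Z_to (t : R) (z : nat * seq R * R) : Prop :=
  (exists U0 : R, forall u, u <= U0 -> (Zemp u t).1.1 = z.1.1) /\
  (forall eps : R, 0 < eps -> exists U0 : R, forall u, u <= U0 ->
     `|(Zemp u t).2 - z.2| < eps /\
     forall p : nat, (p < c)%N -> `|nth 0 (Zemp u t).1.2 p - nth 0 z.1.2 p| < eps).

End Model.

From HB Require Import structures.
From mathcomp Require Import all_boot all_order all_algebra.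
From mathcomp Require Import boolp classical_sets reals.
From mathcomp Require Import zify ring lra.
Import Order.TTheory GRing.Theory Num.Theory.
Local Open Scope ring_scope.
Set Implicit Arguments. Unset Strict Implicit. Unset Printing Implicit Defensive.

(* The Kiefer-Wolfowitz map w |-> S((w + v e1 - a 1)^+) is monotone for the
   componentwise order, and one step of it from W_v(T_m) stays below W_v(T_{m+1}):
   measured from T_m, W_v(T_m) lists the next server points after the one
   preceding the departure of customer m, and the server that takes him is then
   busy for exactly his service time.  Hence 0 <= W_k'(T_k; 0) <= W_v(T_k) for
   all k' <= k; once the chains started at T_k from W_v(T_k) and from 0 merge,
   every chain started from 0 earlier is squeezed onto them, so W(m) is attained.
   Started at T_k in the vacation state, the FCFS queue lets the Q_v(T_k) waiting
   customers leave at the successive server points, so customer k again finds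
   the workload W_v(T_k); and once customer n is in service, the state of a FCFS
   queue only depends on the workload vector he found on arrival. *)

(** * Componentwise order and sorting *)

Section PointwiseOrder.
Context {disp : Order.disp_t} {T : orderType disp}.
Implicit Types s t u : seq T.

Definition le_pw s t := all2 (fun x y : T => (x <= y)%O) s t.

Lemma le_pw_trans s t u : le_pw s t -> le_pw t u -> le_pw s u.
Proof.
elim: s t u => [|x s IH] [|y t] [|z u] //= /andP[xy st] /andP[yz tu].
by rewrite (le_trans xy yz) (IH _ _ st tu).
Qed.

Lemma le_pw_anti s t : le_pw s t -> le_pw t s -> s = t.
Proof.
elim: s t => [|x s IH] [|y t] //= /andP[xy st] /andP[yx ts].
by rewrite (IH _ st ts) (@le_anti _ _ x y) ?xy.
Qed.

Lemma le_pw_size s t : le_pw s t -> size s = size t.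
Proof. by elim: s t => [|x s IH] [|y t] //= /andP[_ /IH ->]. Qed.

Lemma le_pw_map (f : T -> T) s t :
  {homo f : x y / (x <= y)%O} -> le_pw s t -> le_pw (map f s) (map f t).
Proof. by move=> hf; elim: s t => [|x s IH] [|y t] //= /andP[/hf -> /IH]. Qed.

Lemma le_pw_map2 (I : Type) (F G : I -> T) (l : seq I) :
  (forall i, (F i <= G i)%O) -> le_pw (map F l) (map G l).
Proof. by move=> h; elim: l => //= i l ->; rewrite h. Qed.

Lemma le_pw_count s t x : le_pw s t ->
  (count (fun y => x <= y)%O s <= count (fun y => x <= y)%O t)%N.
Proof.
elim: s t => [|y s IH] [|z t] //= /andP[yz /IH st]; apply: leq_add => //.
by case: (boolP (x <= y)%O) => //= xy; rewrite (le_trans xy yz).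
Qed.

Lemma le_pw_sorted_count s t : sorted <=%O s -> sorted <=%O t -> size s = size t ->
  (forall x, count (fun y => x <= y)%O s <= count (fun y => x <= y)%O t)%N ->
  le_pw s t.
Proof.
elim: s t => [|x s IH] [|y t] //= ps pt [] st hc.
have /allP sx := le_path_min ps; have /allP ty := le_path_min pt.
have cnt_all (z : T) r : {in r, forall w, (z <= w)%O} ->
    count (fun w => z <= w)%O r = size r.
  by move=> h; rewrite (eq_in_count (a2 := predT)) ?count_predT // => w /h ->.
have xy : (x <= y)%O.
  rewrite leNgt; apply/negP => yx; have := hc x.
  rewrite lexx leNgt yx cnt_all // add1n add0n st ltnNge count_size //.
rewrite xy /=; apply: IH; rewrite ?(path_sorted ps) ?(path_sorted pt) // => z.
have := hc z; case: (leP z x) => zx; first by rewrite (le_trans zx xy) !add1n.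
case: (leP z y) => zy /=; last by rewrite !add0n.
by move=> _; rewrite (cnt_all z t) -?st ?count_size // => w /ty; apply: le_trans.
Qed.

Lemma le_pw_sort s t : le_pw s t -> le_pw (sort <=%O s) (sort <=%O t).
Proof.
move=> st; apply: le_pw_sorted_count; rewrite ?sort_le_sorted ?size_sort //.
  exact: le_pw_size.
by move=> x; rewrite !count_sort le_pw_count.
Qed.

End PointwiseOrder.

Section SortR.
Context {R : realType}.
Implicit Types s t : seq R.

Lemma sortR_sorted s : sorted <=%O (sortR s). Proof. exact: sort_le_sorted. Qed.
Lemma perm_sortR s : perm_eq (sortR s) s. Proof. by rewrite /sortR perm_sort. Qed.
Lemma size_sortR s : size (sortR s) = size s. Proof. exact: size_sort. Qed.
Lemma mem_sortR s : sortR s =i s. Proof. exact: mem_sort. Qed.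
Lemma sortR_id s : sorted <=%O s -> sortR s = s. Proof. exact: sort_le_id. Qed.
Lemma sortR_perm s t : perm_eq s t -> sortR s = sortR t.
Proof. exact/perm_sort_leP. Qed.

Lemma sortR_map (f : R -> R) s : {homo f : x y / x <= y} ->
  sortR (map f s) = map f (sortR s).
Proof.
move=> hf; apply: le_sorted_eq; first exact: sortR_sorted.
- by apply: (homo_sorted hf); apply: sortR_sorted.
- by rewrite (permPl (perm_sortR _)) perm_map // perm_sym perm_sortR.
Qed.

Lemma sorted_nseq (x : R) m : sorted <=%O (nseq m x).
Proof. by elim: m => //= -[|m] //= ->; rewrite lexx. Qed.

Lemma le_pw_nseq0 s : all (fun x => 0 <= x) s -> le_pw (nseq (size s) 0) s.
Proof. by elim: s => //= x s IH /andP[-> /IH]. Qed.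

End SortR.

(** * The Kiefer-Wolfowitz recursion *)

Lemma max_subr0_homo {R : realType} (a : R) :
  {homo (fun x => Num.max (x - a) 0) : x y / x <= y}.
Proof. by move=> x y xy; rewrite ge_max !le_max lexx lerD2r xy !orbT. Qed.

Lemma max_subr0_max0 {R : realType} (y a : R) : 0 <= a ->
  Num.max (Num.max y 0 - a) 0 = Num.max (y - a) 0.
Proof.
by move=> ha; case: (leP y 0) => h; case: (leP (y - a) 0) => h2;
  case: (leP (0 - a) 0) => h3 //; lra.
Qed.

Section KieferWolfowitz.
Context {R : realType} {c : nat} (T0 : int -> R) (TS : 'I_c -> int -> R).
Local Notation Witer := (Witer T0 TS).

Lemma le_pw_kwstep (w w' : seq R) v a : le_pw w w' ->
  le_pw (kwstep w v a) (kwstep w' v a).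
Proof.
move=> ww; apply: le_pw_sort; apply: le_pw_map; first exact: max_subr0_homo.
case: w w' ww => [|x w] [|y w'] //=; first by rewrite lexx.
by move=> /andP[xy ->]; rewrite lerD2r xy.
Qed.

Lemma size_kwstep (w : seq R) v a : (0 < size w)%N -> size (kwstep w v a) = size w.
Proof. by case: w => //= x w _; rewrite size_sortR /= size_map. Qed.

Lemma kwstep_ge0 (w : seq R) v a : all (fun x => 0 <= x) (kwstep w v a).
Proof. by apply/allP => x; rewrite mem_sortR => /mapP[y _ ->]; rewrite le_max lexx orbT. Qed.

Lemma WiterD k w p q : Witer k w (p + q) = Witer (k + p%:Z) (Witer k w p) q.
Proof.
elim: q => [|q IH]; first by rewrite addn0.
by rewrite addnS /= IH PoszD addrA.
Qed.

Lemma le_pw_Witer k w w' p : le_pw w w' -> le_pw (Witer k w p) (Witer k w' p).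
Proof. by move=> h; elim: p => //= p IH; apply: le_pw_kwstep. Qed.

Lemma size_Witer k w p : (0 < size w)%N -> size (Witer k w p) = size w.
Proof. by move=> h; elim: p => //= p IH; rewrite size_kwstep IH. Qed.

Lemma Witer_ge0 k w p : all (fun x => 0 <= x) w -> all (fun x => 0 <= x) (Witer k w p).
Proof. by case: p => //= p _; apply: kwstep_ge0. Qed.

Lemma head_Wt0_ge0 k n : 0 <= head 0 (Wt T0 TS k (nseq c 0) n).
Proof.
have : all (fun x => 0 <= x) (Wt T0 TS k (nseq c 0) n).
  by apply: Witer_ge0; apply/allP => x /nseqP[-> _].
by case: (Wt _ _ _ _ _) => //= x s /andP[].
Qed.

Lemma WtE k w n m : k <= n -> n <= m ->
  Wt T0 TS k w m = Witer n (Wt T0 TS k w n) (absz (m - n)).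
Proof.
move=> kn nm; rewrite /Wt.
have -> : absz (m - k) = (absz (n - k) + absz (m - n))%N by lia.
by rewrite WiterD; congr Witer; lia.
Qed.

Lemma Wt_eq_from k w w' n m : k <= n -> n <= m ->
  Wt T0 TS k w n = Wt T0 TS k w' n -> Wt T0 TS k w m = Wt T0 TS k w' m.
Proof. by move=> kn nm H; rewrite !(WtE _ kn nm) H. Qed.

End KieferWolfowitz.

(** * Point processes *)

Section IncreasingUnbounded.
Context {R : realType} (T : int -> R) (hT : incr_unb T).

Lemma leT : {mono T : i j / i <= j}.
Proof. by apply: le_mono; case: hT. Qed.

Lemma ltT : {mono T : i j / i < j}.
Proof. exact: leW_mono leT. Qed.

Lemma T_inj : injective T.
Proof. by move=> i j e; apply: le_anti; rewrite -!leT e lexx. Qed.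

Lemma lastidx_eq t i : T i <= t < T (i + 1) -> lastidx T t = i.
Proof.
move=> hi; apply: xget_unique => // j /andP[hj hj1]; case/andP: hi => hi hi1.
apply: le_anti; rewrite -(ltzD1 j) -(ltzD1 i) -!ltT.
by rewrite (le_lt_trans hj hi1) (le_lt_trans hi hj1).
Qed.

Lemma lastidxP t : T (lastidx T t) <= t < T (lastidx T t + 1).
Proof.
suff [i hi] : exists i, T i <= t < T (i + 1) by rewrite (lastidx_eq hi).
case: hT => _ [/(_ t) [i hi] /(_ t) [j hj]].
have ji : j < i by rewrite -ltT (lt_trans hj hi).
have : j + (absz (i - j))%:Z = i by lia.
move: (absz (i - j)) (ltW hj) => d hj' e {ji hj}.
elim: d j hj' e => [|d IH] j' hj' e.
  by move: hi; rewrite -e addr0 ltNge hj'.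
case: (ltP t (T (j' + 1))) => h; first by exists j'; rewrite hj' h.
by apply: (IH (j' + 1)) => //; rewrite -e; lia.
Qed.

Lemma lastidx_le t : T (lastidx T t) <= t. Proof. by case/andP: (lastidxP t). Qed.
Lemma lastidx_gt t : t < T (lastidx T t + 1). Proof. by case/andP: (lastidxP t). Qed.

Lemma lastidxT i : lastidx T (T i) = i.
Proof. by apply: lastidx_eq; rewrite lexx ltT ltzD1 lexx. Qed.

Lemma lastidx_ge i t : T i <= t -> i <= lastidx T t.
Proof. by move=> h; rewrite -ltzD1 -ltT (le_lt_trans h) ?lastidx_gt. Qed.

Lemma lastidx_lt i t : t < T i -> lastidx T t < i.
Proof. by move=> h; rewrite -ltT (le_lt_trans (lastidx_le t)). Qed.

Lemma lastidx_mono s t : s <= t -> lastidx T s <= lastidx T t.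
Proof. by move=> st; apply: lastidx_ge; apply: le_trans (lastidx_le s) st. Qed.

Lemma Ncount_ge0 s t : s <= t -> 0 <= Ncount T s t.
Proof. by move/lastidx_mono; rewrite subr_ge0. Qed.

Lemma Ncount_add s t u : Ncount T s t + Ncount T t u = Ncount T s u.
Proof. by rewrite /Ncount addrC addrA subrK. Qed.

Lemma firstge_eq t m : T (m - 1) < t <= T m -> firstge T t = m.
Proof.
move=> hm; apply: xget_unique => // j /andP[hj hj1]; case/andP: hm => hm hm1.
have lt_succ i i' : T (i - 1) < T i' -> i <= i' by rewrite ltT; lia.
by apply: le_anti; rewrite !lt_succ // ?(lt_le_trans hm hj1) ?(lt_le_trans hj hm1).
Qed.

End IncreasingUnbounded.

(** * The vacation system *)

Lemma int_max_exists (P : int -> Prop) (q0 B : int) :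
  P q0 -> (forall q, P q -> q <= B) -> exists2 q, P q & forall q', P q' -> q' <= q.
Proof.
move=> Pq0 ub; pose Q n := `[< P (q0 + n%:Z) >].
have exQ : exists n, Q n by exists 0%N; apply/asboolP; rewrite addr0.
have ubQ n : Q n -> (n <= absz (B - q0))%N.
  by move=> /asboolP /ub; have := ub _ Pq0; lia.
case: (ex_maxnP exQ ubQ) => n /asboolP Pn maxn; exists (q0 + n%:Z) => // q Pq.
case: (leP q q0) => [|lt_q0q]; first lia.
have : Q (absz (q - q0)) by apply/asboolP; have -> : q0 + (absz (q - q0))%:Z = q by lia.
by move/maxn; lia.
Qed.

Lemma ub_in_interval {R : realType} (a b : R) (l : seq R) : a < b ->
  {in l, forall y, y < b} -> exists2 m, a <= m < b & {in l, forall y, y <= m}.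
Proof.
move=> ab; elim: l => [_|y l IH lt_b]; first by exists a; rewrite ?lexx.
have [|m /andP[am mb] le_m] := IH; first by move=> z zl; apply: lt_b; rewrite inE zl orbT.
exists (Num.max y m); first by rewrite le_max am orbT gt_max mb lt_b ?mem_head.
by move=> z; rewrite inE le_max => /orP[/eqP->|/le_m->]; rewrite ?lexx ?orbT.
Qed.

Section VacationSystem.
Context {R : realType} {c : nat} (T0 : int -> R) (TS : 'I_c -> int -> R).
Hypotheses (hc : (0 < c)%N) (hA : arrivals_ok T0) (hS : servers_ok TS)
  (hN : no_coincidence T0 TS) (hQ : Qv_finite T0 TS).

Let hT0 : incr_unb T0. Proof. by case: hA. Qed.
Local Notation NS := (NS TS).
Local Notation qdiff := (qdiff T0 TS).
Local Notation Qv := (Qv T0 TS).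

Lemma NS_add s t u : NS s t + NS t u = NS s u.
Proof. by rewrite /NS -big_split; apply: eq_bigr => i _; apply: Ncount_add. Qed.

Lemma NSxx t : NS t t = 0.
Proof. by rewrite /NS big1 // => i _; rewrite /Ncount subrr. Qed.

Lemma NS_ge0 s t : s <= t -> 0 <= NS s t.
Proof. by move=> st; apply: sumr_ge0 => i _; apply: Ncount_ge0. Qed.

Lemma qdiff_add s t u : qdiff s t + qdiff t u = qdiff s u.
Proof. by rewrite /qdiff -(NS_add s t u) -(Ncount_add T0 s t u) opprD addrACA. Qed.

Lemma Qv_spec t : (forall s, s <= t -> qdiff s t <= Qv t) /\
  exists2 s, s <= t & qdiff s t = Qv t.
Proof.
have [B hB] := hQ t.
pose attained q := exists2 s, s <= t & qdiff s t = q.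
have [q [s st sq] qmax] : exists2 q, attained q & forall q', attained q' -> q' <= q.
  apply: (int_max_exists (q0 := 0) (B := B)); last by move=> q [s st <-]; apply: hB.
  by exists t; rewrite // /qdiff /NS /Ncount subrr big1 // => i _; rewrite subrr.
apply: (@xgetI _ 0 (fun q => (forall s, s <= t -> qdiff s t <= q) /\ attained q) q).
by split; [move=> s' s't; apply: qmax; exists s' | exists s].
Qed.

Lemma Qv_ge s t : s <= t -> qdiff s t <= Qv t.
Proof. by case: (Qv_spec t) => h _; apply: h. Qed.

Lemma Qv_att t : exists2 s, s <= t & qdiff s t = Qv t.
Proof. by case: (Qv_spec t). Qed.

Definition nextpts (x : R) : seq R :=
  [seq TS s (lastidx (TS s) x + 1) | s <- enum 'I_c].
Definition nextsp (x : R) : R := head 0 (sortR (nextpts x)).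

Lemma size_nextpts x : size (nextpts x) = c.
Proof. by rewrite size_map size_enum_ord. Qed.

Lemma nextpts_gt x y : y \in nextpts x -> x < y.
Proof. by case/mapP => s _ ->; apply: lastidx_gt. Qed.

Lemma nextpts_SP x y : y \in nextpts x -> isSP TS y.
Proof. by case/mapP => s _ ->; exists s, (lastidx (TS s) x + 1). Qed.

Lemma nextpts_TS x s : TS s (lastidx (TS s) x + 1) \in nextpts x.
Proof. by apply: map_f; rewrite mem_enum. Qed.

Lemma sortR_nextpts x : sortR (nextpts x) = nextsp x :: behead (sortR (nextpts x)).
Proof.
rewrite /nextsp; case E: (sortR (nextpts x)) => [|a l] //.
by move: hc; rewrite -(size_nextpts x) -size_sortR E.
Qed.

Lemma nextsp_in x : nextsp x \in nextpts x.
Proof. by rewrite -mem_sortR sortR_nextpts mem_head. Qed.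

Lemma nextsp_le x y : y \in nextpts x -> nextsp x <= y.
Proof.
rewrite -mem_sortR; have := sortR_sorted (nextpts x); rewrite sortR_nextpts.
by move=> /le_path_min /allP h; rewrite inE => /orP[/eqP->//|/h].
Qed.

Lemma nextsp_gt x : x < nextsp x. Proof. exact: nextpts_gt (nextsp_in x). Qed.

Lemma nextsp_TS x : exists s, TS s (lastidx (TS s) x + 1) = nextsp x.
Proof. by case/mapP: (nextsp_in x) => s _ ->; exists s. Qed.

(* no two servers fire at the same time, so only the one realizing [nextsp x]
   advances *)
Lemma lastidx_nextsp x s0 : TS s0 (lastidx (TS s0) x + 1) = nextsp x ->
  forall s, lastidx (TS s) (nextsp x) = lastidx (TS s) x + (s == s0)%:R.
Proof.
move=> h0 s; have [->|ne] := eqVneq s s0; first by rewrite -h0 lastidxT.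
rewrite addr0; apply: lastidx_eq; first exact: hS.
rewrite (le_trans (lastidx_le (hS s) x) (ltW (nextsp_gt x))) /=.
rewrite lt_neqAle nextsp_le ?nextpts_TS // andbT; apply/eqP => e.
case: hN => _ /(_ s s0 _ (lastidx (TS s0) x + 1) (elimN eqP ne)); apply.
by rewrite h0 e.
Qed.

Lemma NS_nextsp x : NS x (nextsp x) = 1.
Proof.
have [s0 h0] := nextsp_TS x.
rewrite /NS (bigD1 s0) //= big1 => [|s /= ne].
  by rewrite /Ncount (lastidx_nextsp h0) eqxx addr0 addrAC subrr add0r.
by rewrite /Ncount (lastidx_nextsp h0) (negbTE ne) addr0 subrr.
Qed.

Lemma nextsp_first x p : isSP TS p -> x < p -> nextsp x <= p.
Proof.
case=> s [m <-] xp; apply: le_trans (nextsp_le (nextpts_TS x s)) _.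
by rewrite leT // lezD1 (lastidx_lt (hS s)).
Qed.

Lemma NS_SP_ge1 x p : isSP TS p -> x < p -> 1 <= NS x p.
Proof.
case=> s [m e] xp; rewrite /NS (bigD1 s) //=.
have h1 : 1 <= Ncount (TS s) x p.
  rewrite /Ncount -e lastidxT // lerBrDr addrC lezD1.
  by apply: lastidx_lt; rewrite ?e.
apply: le_trans h1 _; rewrite lerDl.
by apply: sumr_ge0 => i _; apply: Ncount_ge0 => //; apply: ltW.
Qed.

Lemma NS_iter_nextsp x l : NS x (iter l nextsp x) = l%:Z.
Proof.
elim: l => [|l IH]; first exact: NSxx.
by rewrite iterS -(NS_add x (iter l nextsp x)) IH NS_nextsp -addn1 PoszD.
Qed.

Lemma iter_nextsp_ge x l : x <= iter l nextsp x.
Proof. by elim: l => //= l IH; apply: le_trans IH (ltW (nextsp_gt _)). Qed.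

Lemma iter_nextsp_gt x l : x < iter l.+1 nextsp x.
Proof. exact: le_lt_trans (iter_nextsp_ge x l) (nextsp_gt _). Qed.

Lemma iter_nextsp_SP x l : isSP TS (iter l.+1 nextsp x).
Proof. exact: nextpts_SP (nextsp_in _). Qed.

Lemma NS_lt_SP x p p' : isSP TS p' -> p < p' -> NS x p < NS x p'.
Proof. by move=> sp' lt; rewrite -(NS_add x p p') ltrDl (lt_le_trans ltr01) ?NS_SP_ge1. Qed.

Lemma SP_NS_inj x p p' : isSP TS p -> isSP TS p' -> NS x p = NS x p' -> p = p'.
Proof.
move=> sp sp' e; case: (ltgtP p p') => // lt; move: (lt).
  by move/(NS_lt_SP x sp'); rewrite e ltxx.
by move/(NS_lt_SP x sp); rewrite e ltxx.
Qed.

(* just before an arrival epoch there is an interval containing that arrival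
   and no server point *)
Lemma Qv_arrival_ge1 i : 1 <= Qv (T0 i).
Proof.
have lt_Ti : {in [seq TS s (lastidx (TS s) (T0 i)) | s <- enum 'I_c], forall y, y < T0 i}.
  move=> _ /mapP[s _ ->]; rewrite lt_neqAle lastidx_le // andbT.
  by apply/eqP => e; case: hN => /(_ i s _ (esym e)).
have lt_prev : T0 (i - 1) < T0 i by rewrite ltT // gtrDl oppr_lt0.
have [sM /andP[sM_ge sM_lt] ge_sM] := ub_in_interval lt_prev lt_Ti.
have lastT0 : lastidx T0 sM = i - 1 by apply: lastidx_eq; rewrite // sM_ge subrK.
have lastTS s : lastidx (TS s) sM = lastidx (TS s) (T0 i).
  apply: lastidx_eq; first exact: hS.
  by rewrite ge_sM ?map_f ?mem_enum ?(lt_trans sM_lt) ?lastidx_gt.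
have <- : qdiff sM (T0 i) = 1.
  rewrite /qdiff /Ncount lastT0 lastidxT // /NS big1 => [|s _]; last first.
    by rewrite /Ncount lastTS subrr.
  by rewrite subr0 opprB addrC subrK.
exact: Qv_ge (ltW sM_lt).
Qed.

Lemma depE i p : isSP TS p -> T0 i < p -> NS (T0 i) p = Qv (T0 i) -> dep T0 TS i = p.
Proof.
move=> sp ip e; apply: xget_unique => // p' [sp' [ip' e']].
by apply: (SP_NS_inj (x := T0 i) sp' sp); rewrite e e'.
Qed.

Definition predep (i : int) : R := iter (absz (Qv (T0 i))).-1 nextsp (T0 i).

Lemma dep_predep i : dep T0 TS i = nextsp (predep i).
Proof.
have := Qv_arrival_ge1 i; rewrite /predep.
case E: (absz (Qv (T0 i))) => [|q] Q1; first lia.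
apply: depE; [exact: iter_nextsp_SP | exact: iter_nextsp_gt |].
by rewrite -iterS NS_iter_nextsp -E; lia.
Qed.

Lemma predep_ge i : T0 i <= predep i. Proof. exact: iter_nextsp_ge. Qed.

Lemma NS_dep i : NS (T0 i) (dep T0 TS i) = Qv (T0 i).
Proof.
rewrite dep_predep -iterS NS_iter_nextsp; have := Qv_arrival_ge1 i; lia.
Qed.

Lemma VcE i s m : TS s m = dep T0 TS i -> Vc T0 TS i = TS s (m + 1) - TS s m.
Proof.
move=> h; apply: xget_unique; first by exists s, m.
move=> v [s' [m' [h' ->]]]; have ss : s' = s.
  apply/eqP; apply/negP => /negP ne; case: hN => _ /(_ s' s m' m (elimN eqP ne)).
  by rewrite h h'.
by subst s'; rewrite (T_inj (hS s) (etrans h' (esym h))).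
Qed.

Lemma Vc_ge0 i : 0 <= Vc T0 TS i.
Proof.
rewrite /Vc; case: xgetP => // v _ [s [m [_ ->]]].
by rewrite subr_ge0 ltW // ltT // ltzD1.
Qed.

Lemma Aint_gt0 i : 0 < Aint T0 i.
Proof. by rewrite subr_gt0 ltT // ltzD1. Qed.

(* after the server point [nextsp x], the server that fired is busy for the
   service time of the customer it took *)
Lemma perm_nextpts_dep x i : dep T0 TS i = nextsp x ->
  perm_eq ((nextsp x + Vc T0 TS i) :: behead (sortR (nextpts x))) (nextpts (nextsp x)).
Proof.
move=> hd; have [s0 h0] := nextsp_TS x.
pose f s := TS s (lastidx (TS s) x + 1).
pose g s := TS s (lastidx (TS s) (nextsp x) + 1).
have hV : nextsp x + Vc T0 TS i = g s0.
  rewrite (@VcE i s0 (lastidx (TS s0) x + 1)) ?h0 // addrC subrK.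
  by rewrite /g (lastidx_nextsp h0) eqxx.
have gf : {in rem s0 (enum 'I_c), g =1 f}.
  move=> s; rewrite mem_rem_uniq ?enum_uniq // inE => /andP[ne _].
  by rewrite /g (lastidx_nextsp h0) (negbTE ne) addr0.
have p1 : perm_eq (enum 'I_c) (s0 :: rem s0 (enum 'I_c)).
  by apply: perm_to_rem; rewrite mem_enum.
have pB : perm_eq (behead (sortR (nextpts x))) (map f (rem s0 (enum 'I_c))).
  have q1 : perm_eq (nextsp x :: behead (sortR (nextpts x))) (map f (enum 'I_c)).
    by rewrite -sortR_nextpts perm_sortR.
  have fs0 : f s0 = nextsp x := h0.
  by have := perm_trans q1 (perm_map f p1); rewrite /= fs0 perm_cons.
rewrite /nextpts -/g (permPr (perm_map g p1)) /= hV perm_cons ((eq_in_map _ _ _).1 gf).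
exact: pB.
Qed.

Lemma Wv_predep m : Wv T0 TS m = sortR [seq y - T0 m | y <- nextpts (predep m)].
Proof.
set d := dep T0 TS m.
have eU : Uleftvec TS d = [seq y - d | y <- nextpts (predep m)].
  rewrite /Uleftvec /nextpts -[RHS]map_comp; apply: eq_map => s /=.
  congr (TS s _ - _); apply: firstge_eq; first exact: hS.
  rewrite addrK /d dep_predep nextsp_le ?nextpts_TS // andbT.
  exact: le_lt_trans (lastidx_le (hS s) _) (nextsp_gt _).
rewrite /Wv eU -sortR_map; last by move=> x y xy; rewrite lerD2l.
by congr sortR; rewrite -map_comp; apply: eq_map => y /=; rewrite /D0 -/d; ring.
Qed.

(* seen from [T0 m], [dep (m + 1)] is at least [Qv (T0 m) + 1] server points away:
   [Qv] drops by at most the number of server points between two arrivals *)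
Lemma dep_lt m : dep T0 TS m < dep T0 TS (m + 1).
Proof.
have [s st hs] := Qv_att (T0 m).
have Tm1 : T0 m < T0 (m + 1) by rewrite ltT // ltzD1.
have := Qv_ge (le_trans st (ltW Tm1)).
rewrite -(qdiff_add s (T0 m)) hs /qdiff /Ncount !lastidxT // -(NS_dep (m + 1)) => hq.
have e1 := NS_add (T0 m) (T0 (m + 1)) (dep T0 TS (m + 1)).
have e2 := NS_add (T0 m) (dep T0 TS (m + 1)) (dep T0 TS m).
rewrite NS_dep in e2; rewrite ltNge; apply/negP => /NS_ge0; lia.
Qed.

Lemma dep_le_predep m : dep T0 TS m <= predep (m + 1).
Proof.
have dep_SP : isSP TS (dep T0 TS m) by rewrite dep_predep; apply: nextpts_SP (nextsp_in _).
rewrite leNgt; apply/negP => /(nextsp_first dep_SP).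
by rewrite -dep_predep leNgt dep_lt.
Qed.

Lemma le_pw_kwstep_Wv m :
  le_pw (kwstep (Wv T0 TS m) (Vc T0 TS m) (Aint T0 m)) (Wv T0 TS (m + 1)).
Proof.
pose f y := y - T0 m.
have eWv : Wv T0 TS m = f (nextsp (predep m)) :: map f (behead (sortR (nextpts (predep m)))).
  rewrite Wv_predep sortR_map; last by move=> x y xy; rewrite lerD2r.
  by rewrite sortR_nextpts.
pose h x := Num.max (x - Aint T0 m) 0.
have -> : kwstep (Wv T0 TS m) (Vc T0 TS m) (Aint T0 m) =
    sortR (map (h \o f) (nextpts (nextsp (predep m)))).
  rewrite /kwstep eWv /= -map_comp; apply: sortR_perm.
  have := perm_map (h \o f) (perm_nextpts_dep (dep_predep m)).
  by rewrite /= /f addrAC.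
rewrite Wv_predep; apply: le_pw_sort; rewrite /nextpts -!map_comp.
apply: le_pw_map2 => s /=; rewrite /h /f /Aint ge_max; apply/andP; split.
- rewrite opprB addrA subrK lerD2r leT // lerD2r.
  by apply: (lastidx_mono (hS s)); rewrite -dep_predep dep_le_predep.
- by rewrite subr_ge0 ltW // (le_lt_trans (predep_ge (m + 1))) ?lastidx_gt.
Qed.

Lemma le_pw_0_Wv m : le_pw (nseq c 0) (Wv T0 TS m).
Proof.
rewrite Wv_predep; set L := map _ _.
have <- : size (sortR L) = c by rewrite size_sortR size_map size_nextpts.
apply: le_pw_nseq0; rewrite all_sort.
apply/allP => _ /mapP[y yp ->]; rewrite subr_ge0 ltW //.
exact: le_lt_trans (predep_ge m) (nextpts_gt yp).
Qed.

Lemma le_pw_Witer0_Wv k l : le_pw (Witer T0 TS k (nseq c 0) l) (Wv T0 TS (k + l%:Z)).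
Proof.
elim: l => [|l IH]; first by rewrite addr0 le_pw_0_Wv.
have -> : k + l.+1%:Z = k + l%:Z + 1 by rewrite -addn1 PoszD addrA.
apply: le_pw_trans (le_pw_kwstep_Wv _).
exact: le_pw_kwstep.
Qed.

(* monotonicity of the Kiefer-Wolfowitz map squeezes every earlier start with
   zero workload between the two coupled chains *)
Lemma Wt0_coupled k n m k' : k <= n -> n <= m -> k' <= k ->
  Wt T0 TS k (Wv T0 TS k) n = Wt T0 TS k (nseq c 0) n ->
  Wt T0 TS k' (nseq c 0) m = Wt T0 TS k (nseq c 0) m.
Proof.
move=> kn nm k'k H; have km := le_trans kn nm.
rewrite (WtE _ _ _ k'k km); set X := Wt T0 TS k' (nseq c 0) k.
have X_le : le_pw X (Wv T0 TS k).
  by have := le_pw_Witer0_Wv k' (absz (k - k')); rewrite gez0_abs ?subr_ge0 // subrKC.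
have le_X : le_pw (nseq c 0) X.
  have sX : size X = c by rewrite size_Witer // size_nseq.
  rewrite -[X in nseq X _]sX; apply: le_pw_nseq0; apply: Witer_ge0.
  by apply/allP => y; rewrite mem_nseq => /andP[_ /eqP->].
apply: le_pw_anti; last exact: le_pw_Witer le_X.
by rewrite -(Wt_eq_from kn nm H); apply: le_pw_Witer X_le.
Qed.

End VacationSystem.

(** * FCFS queues *)

Section MonotoneCount.
Context {R : realType} (f : nat -> R) (t : R).
Hypothesis f_homo : {homo f : x y / (x <= y)%N >-> x <= y}.

Lemma count_iota_le_shift a M : f a <= t ->
  count (fun l => f l <= t) (iota 0 (a + M)) = (a + count (fun i => f (a + i) <= t)%R (iota 0 M))%N.
Proof.
move=> fa; rewrite iotaD count_cat add0n -[X in iota X M]addn0 iotaDl count_map.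
congr addn; rewrite -[RHS](size_iota 0 a) -count_predT; apply: eq_in_count => l.
by rewrite mem_iota add0n => /andP[_ la]; rewrite (le_trans (f_homo (ltnW la))).
Qed.

Lemma count_iota_gt_shift a M : f a <= t ->
  count (fun l => t < f l) (iota 0 (a + M)) = count (fun i => t < f (a + i)) (iota 0 M).
Proof.
move=> fa; rewrite iotaD count_cat add0n -[X in iota X M]addn0 iotaDl count_map.
rewrite (eq_in_count (a2 := pred0)) ?count_pred0 // => l.
by rewrite mem_iota add0n => /andP[_ la]; rewrite /= ltNge (le_trans (f_homo (ltnW la))).
Qed.

Lemma count_iota_le_last M i : count (fun l => f l <= t) (iota 0 M) = i.+1 -> f i <= t.
Proof.
move=> cnt; rewrite leNgt; apply/negP => lt_fi.
suff : (count (fun l => (f l <= t)%R) (iota 0 M) <= i)%N by rewrite cnt ltnn.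
have [Mi|iM] := leqP M i; first by rewrite (leq_trans (count_size _ _)) ?size_iota.
rewrite -(subnKC (ltnW iM)) iotaD count_cat add0n (eq_in_count (a2 := pred0) (s := iota i _)).
  by rewrite count_pred0 addn0 (leq_trans (count_size _ _)) ?size_iota.
move=> l; rewrite mem_iota => /andP[il _] /=.
by apply/negbTE; rewrite -ltNge (lt_le_trans lt_fi) ?f_homo.
Qed.

End MonotoneCount.

Section FCFSQueue.
Context {R : realType} {c : nat} (T0 : int -> R) (TS : 'I_c -> int -> R).
Hypotheses (hA : arrivals_ok T0) (hS : servers_ok TS).

Let hT0 : incr_unb T0. Proof. by case: hA. Qed.
Local Notation Fseq := (Fseq T0 TS).
Local Notation sigma := (sigma T0 TS).
Local Notation Vc := (Vc T0 TS).

(* workload vector found by customer [j + l] at his arrival *)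
Definition Wq u r j l : seq R := [seq Num.max (x - T0 (j + l%:Z)) 0 | x <- Fseq u r j l].

Lemma FseqS u r j l : Fseq u r j l.+1 =
  sortR ((sigma u r j l + Vc (j + l%:Z)) :: behead (Fseq u r j l)).
Proof. by []. Qed.

Lemma size_Fseq u r j l : (0 < size r)%N -> size (Fseq u r j l) = size r.
Proof.
move=> hr; elim: l => [|l IH]; first by rewrite /= size_sortR size_map.
by rewrite FseqS size_sortR /=; case: (Fseq u r j l) IH => [e|x F <-] //; rewrite -e in hr.
Qed.

Lemma Fseq_cons u r j l : (0 < size r)%N ->
  Fseq u r j l = head 0 (Fseq u r j l) :: behead (Fseq u r j l).
Proof.
by move=> hr; have := size_Fseq u j l hr; case: (Fseq u r j l) => // e; rewrite -e in hr.
Qed.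

Lemma Fseq_sorted u r j l : sorted <=%O (Fseq u r j l).
Proof. by case: l => [|l]; apply: sortR_sorted. Qed.

Lemma sigma_ge u r j l : T0 (j + l%:Z) <= sigma u r j l.
Proof. by rewrite /sigma !le_max lexx orbT. Qed.

Lemma sigmaE u r j l : (0 < size r)%N -> u <= T0 (j + l%:Z) ->
  sigma u r j l = T0 (j + l%:Z) + head 0 (Wq u r j l).
Proof.
move=> hr hu; rewrite /sigma /Wq (Fseq_cons u j l hr) /= (max_r hu).
by case: (leP (T0 (j + l%:Z)) (head 0 (Fseq u r j l))) => h;
  case: (leP (head 0 (Fseq u r j l) - T0 (j + l%:Z)) 0) => h2; lra.
Qed.

Lemma WqS u r j l : (0 < size r)%N -> u <= T0 (j + l%:Z) ->
  Wq u r j l.+1 = kwstep (Wq u r j l) (Vc (j + l%:Z)) (Aint T0 (j + l%:Z)).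
Proof.
move=> hr hu; rewrite {1}/Wq FseqS -sortR_map; last exact: max_subr0_homo.
have eT : T0 (j + l.+1%:Z) = T0 (j + l%:Z) + Aint T0 (j + l%:Z).
  by rewrite /Aint subrKC -addn1 PoszD addrA.
have hA0 := ltW (Aint_gt0 hA (j + l%:Z)).
rewrite /kwstep (sigmaE hr hu) /Wq (Fseq_cons u j l hr) /=; congr (sortR (_ :: _)).
  by rewrite eT; congr (Num.max _ 0); ring.
rewrite -map_comp; apply: eq_map => x /=.
by rewrite max_subr0_max0 // eT; congr (Num.max _ 0); ring.
Qed.

Lemma Wq_Witer u r j a n : (0 < size r)%N -> j + a%:Z = n -> u <= T0 n ->
  forall i, Wq u r j (a + i) = Witer T0 TS n (Wq u r j a) i.
Proof.
move=> hr ja un; elim=> [|i IH]; first by rewrite addn0.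
have e : j + (a + i)%:Z = n + i%:Z by rewrite PoszD addrA ja.
rewrite addnS WqS ?IH ?e //= (le_trans un) // leT //; lia.
Qed.

Lemma head_FseqS u r j l : (0 < size r)%N ->
  head 0 (Fseq u r j l) <= head 0 (Fseq u r j l.+1).
Proof.
move=> hr; set h := head 0 (Fseq u r j l).
have /allP : all (>= h)%O (Fseq u r j l.+1).
  rewrite FseqS all_sort /= -/h; apply/andP; split.
    apply: le_trans (_ : _ <= sigma u r j l) _; first by rewrite /sigma le_max lexx orbT.
    by rewrite lerDl (Vc_ge0 T0 hS).
  by have := Fseq_sorted u r j l; rewrite (Fseq_cons u j l hr) => /le_path_min.
by apply; rewrite (Fseq_cons u j l.+1 hr) mem_head.
Qed.

Lemma sigma_homo u r j : (0 < size r)%N ->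
  {homo sigma u r j : l l' / (l <= l')%N >-> l <= l'}.
Proof.
move=> hr l l' /subnK <-; elim: (l' - l)%N => // d IH; apply: le_trans IH _.
rewrite addSn; apply: le_max2 (head_FseqS _ _ _ hr); apply: le_max2 => //.
by rewrite leT // lerD2l lez_nat.
Qed.

Lemma resid_Wq u r j l t : T0 (j + l%:Z) <= t ->
  [seq Num.max (x - t) 0 | x <- Fseq u r j l] =
  [seq Num.max (w - (t - T0 (j + l%:Z))) 0 | w <- Wq u r j l].
Proof.
move=> ht; rewrite -map_comp; apply: eq_map => x /=.
by rewrite max_subr0_max0 ?subr_ge0 //; congr (Num.max _ 0); ring.
Qed.

Lemma resid_WqS u r j l t : (0 < size r)%N -> sigma u r j l <= t ->
  sortR [seq Num.max (x - t) 0 | x <- Fseq u r j l.+1] =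
  sortR (Num.max (sigma u r j l + Vc (j + l%:Z) - t) 0 ::
    [seq Num.max (w - (t - T0 (j + l%:Z))) 0 | w <- behead (Wq u r j l)]).
Proof.
move=> hr hs; rewrite FseqS (sortR_perm (perm_map _ (perm_sortR _))) /=.
congr (sortR (_ :: _)); rewrite /Wq behead_map -map_comp; apply: eq_map => x /=.
rewrite max_subr0_max0 ?subr_ge0 ?(le_trans (sigma_ge _ _ _ _) hs) //.
by congr (Num.max _ 0); ring.
Qed.

(* the part of the state of a FCFS queue that is determined, from the moment
   customer [n] enters service on, by the workload [W] he finds on arrival *)
Definition queue_state (n : int) (W : seq R) (t : R) : nat * seq R :=
  let Ws := Witer T0 TS n W in
  let start i := T0 (n + i%:Z) + head 0 (Ws i) in
  let arrived := iota 0 (absz (lastidx T0 t - n + 1)) in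
  (count (fun i => t < start i) arrived,
   if count (fun i => start i <= t) arrived is i.+1 then
     sortR (Num.max (start i + Vc (n + i%:Z) - t) 0 ::
            [seq Num.max (w - (t - T0 (n + i%:Z))) 0 | w <- behead (Ws i)])
   else sortR [seq Num.max (w - (t - T0 n)) 0 | w <- W]).

Lemma Nent_eq u j a n t : j + a%:Z = n -> u <= T0 n -> T0 n <= t ->
  Nent T0 u j t = (a + absz (lastidx T0 t - n + 1)%R)%N.
Proof.
move=> ja un tn; have := lastidx_ge hT0 tn.
by rewrite /Nent ltNge (le_trans un tn) /= => ?; rewrite max_r; lia.
Qed.

Lemma Zstate_queue_state u r j e a n t : (0 < size r)%N -> j + a%:Z = n ->
  u <= T0 n -> T0 n + head 0 (Wq u r j a) <= t ->
  (Zstate T0 TS u r j e t).1 = queue_state n (Wq u r j a) t.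
Proof.
move=> hr ja un ht; set W := Wq u r j a.
have e_n i : j + (a + i)%:Z = n + i%:Z by rewrite PoszD addrA ja.
have sig i : sigma u r j (a + i) = T0 (n + i%:Z) + head 0 (Witer T0 TS n W i).
  by rewrite sigmaE ?e_n -?Wq_Witer // (le_trans un) // leT // lerDl.
have sa : sigma u r j a <= t by rewrite -[a]addn0 sig addr0.
have tn : T0 n <= t by rewrite -ja (le_trans (sigma_ge _ _ _ _) sa).
have homo_sig := sigma_homo u j hr.
rewrite /Zstate /queue_state /= (Nent_eq ja un tn).
rewrite (count_iota_gt_shift homo_sig _ sa) (count_iota_le_shift homo_sig _ sa).
under eq_count => i do rewrite sig.
congr pair; under eq_count => i do rewrite sig.
case E: count => [|i]; first by rewrite addn0 resid_Wq ?ja.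
have homo_start : {homo (fun i => T0 (n + i%:Z) + head 0 (Witer T0 TS n W i)) :
    x y / (x <= y)%N >-> x <= y}.
  by move=> x y xy; rewrite -!sig homo_sig ?leq_add2l.
have := count_iota_le_last homo_start E; rewrite -sig => started.
by rewrite addnS resid_WqS // sig (Wq_Witer hr ja un) e_n.
Qed.

End FCFSQueue.

(** * Coupling *)

Section Coupling.
Context {R : realType} {c : nat} (T0 : int -> R) (TS : 'I_c -> int -> R).
Hypotheses (hc : (0 < c)%N) (hA : arrivals_ok T0) (hS : servers_ok TS)
  (hN : no_coincidence T0 TS) (hQ : Qv_finite T0 TS).

Let hT0 : incr_unb T0. Proof. by case: hA. Qed.
Local Notation NS := (NS TS).
Local Notation qdiff := (qdiff T0 TS).
Local Notation Qv := (Qv T0 TS).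
Local Notation nextsp := (nextsp TS).
Local Notation nextpts := (nextpts TS).

(* the customers waiting at [T0 k] are [k - Qv + 1, ..., k]; they leave the queue
   at the successive server points after [T0 k] *)
Lemma dep_waiting k l : (l < absz (Qv (T0 k)))%N ->
  dep T0 TS (k - Qv (T0 k) + 1 + l%:Z) = iter l.+1 nextsp (T0 k).
Proof.
set Q := Qv (T0 k); set i := k - Q + 1 + l%:Z => lQ.
have Q1 : 1 <= Q := Qv_arrival_ge1 hA hS hN hQ k.
have Tik : T0 i <= T0 k by rewrite leT // /i; lia.
apply: (depE hS); first exact: iter_nextsp_SP.
  exact: le_lt_trans Tik (iter_nextsp_gt hc hS _ _).
rewrite -(NS_add _ (T0 i) (T0 k)) (NS_iter_nextsp hc hS hN); set N := NS (T0 i) (T0 k).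
have shift s : qdiff s (T0 k) = qdiff s (T0 i) + (k - i - N).
  by rewrite -(qdiff_add _ _ s (T0 i)) /qdiff /Ncount !lastidxT.
apply: le_anti; apply/andP; split.
- have [s2 s2k] := Qv_att hQ (T0 k); rewrite -/Q.
  have [s2i|is2] := leP s2 (T0 i).
    by have := Qv_ge hQ s2i; rewrite shift; lia.
  have := lastidx_ge hT0 (ltW is2); have := NS_ge0 hS s2k.
  by rewrite /qdiff /Ncount lastidxT //; lia.
- have [s1 s1i hs1] := Qv_att hQ (T0 i).
  by have := Qv_ge hQ (le_trans s1i Tik); rewrite shift hs1 -/Q; lia.
Qed.

Lemma Uvec_nextpts t : Uvec TS t = [seq y - t | y <- nextpts t].
Proof. by rewrite /Uvec /nextpts -[RHS]map_comp. Qed.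

Lemma Fseq_vacation k l : (l < absz (Qv (T0 k)))%N ->
  Fseq T0 TS (T0 k) (sortR (Uvec TS (T0 k))) (k - Qv (T0 k) + 1) l =
  sortR (nextpts (iter l nextsp (T0 k))).
Proof.
have Q1 := Qv_arrival_ge1 hA hS hN hQ k.
elim: l => [|l IH] lQ.
  rewrite /= (sortR_perm (perm_map _ (perm_sortR _))) Uvec_nextpts -map_comp.
  by congr sortR; rewrite -[RHS]map_id; apply: eq_map => y /=; rewrite addrC subrK.
rewrite FseqS /sigma IH 1?ltnW // (max_l (_ : _ <= T0 k)); last by rewrite leT //; lia.
rewrite max_r; last exact: ltW (iter_nextsp_gt hc hS _ _).
by apply/sortR_perm/(perm_nextpts_dep hc hS hN); apply: dep_waiting; apply: ltnW.
Qed.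

Lemma Wq_vacation k :
  Wq T0 TS (T0 k) (sortR (Uvec TS (T0 k))) (k - Qv (T0 k) + 1) (absz (Qv (T0 k))).-1
  = Wv T0 TS k.
Proof.
have Q1 := Qv_arrival_ge1 hA hS hN hQ k.
rewrite /Wq Fseq_vacation; last by lia.
rewrite (Wv_predep hc hA hS hN hQ) /predep.
have -> : k - Qv (T0 k) + 1 + ((absz (Qv (T0 k))).-1)%:Z = k by lia.
rewrite -sortR_map; last exact: max_subr0_homo.
congr sortR; apply/eq_in_map => y yp; rewrite max_l // subr_ge0 ltW //.
exact: le_lt_trans (iter_nextsp_ge hc hS _ _) (nextpts_gt hS yp).
Qed.

Lemma Wq_zero_Wt u j n : u <= T0 j -> j <= n ->
  Wq T0 TS u (nseq c 0) j (absz (n - j)) = Wt T0 TS j (nseq c 0) n.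
Proof.
move=> uj jn; rewrite -[absz _]add0n (Wq_Witer TS hA _ (addr0 j) uj) ?size_nseq //.
rewrite /Wq /= map_nseq sortR_id ?sorted_nseq // map_nseq !addr0 max_r //.
by rewrite subr_le0.
Qed.

Lemma Wq_vacation_Wt k n : k <= n ->
  Wq T0 TS (T0 k) (sortR (Uvec TS (T0 k))) (k - Qv (T0 k) + 1)
    ((absz (Qv (T0 k))).-1 + absz (n - k)) = Wt T0 TS k (Wv T0 TS k) n.
Proof.
have Q1 := Qv_arrival_ge1 hA hS hN hQ k.
have size_U : (0 < size (sortR (Uvec TS (T0 k))))%N.
  by rewrite size_sortR Uvec_nextpts size_map size_nextpts.
by move=> kn; rewrite (Wq_Witer TS hA size_U _ (lexx _)) ?Wq_vacation //; lia.
Qed.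

Lemma Zstate_elapsed u r j e t : u < T0 (lastidx T0 t) ->
  (Zstate T0 TS u r j e t).2 = t - T0 (lastidx T0 t).
Proof. by move=> ut; rewrite /Zstate /= ut. Qed.

Lemma Zstate_elapsed0 u r j t : u <= T0 (lastidx T0 t) ->
  (Zstate T0 TS u r j 0 t).2 = t - T0 (lastidx T0 t).
Proof.
rewrite le_eqVlt => /orP[/eqP ->|/(Zstate_elapsed r j 0)//].
by rewrite /Zstate /= ltxx add0r.
Qed.

Lemma Wt_coupled_limit k n : k <= n ->
  Wt T0 TS k (Wv T0 TS k) n = Wt T0 TS k (nseq c 0) n ->
  forall m, n <= m -> Wt T0 TS k (Wv T0 TS k) m = Wt T0 TS k (nseq c 0) m /\
    Wlim_to T0 TS m (Wt T0 TS k (nseq c 0) m).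
Proof.
move=> kn H m nm; split; first exact: Wt_eq_from kn nm H.
move=> eps eps_gt0; exists k => k' k'k _ p _.
by rewrite (Wt0_coupled hc hA hS hN hQ kn nm k'k H) subrr normr0.
Qed.

Lemma Zstate_zero u j n e t : u <= T0 j -> j <= n ->
  T0 n + head 0 (Wt T0 TS j (nseq c 0) n) <= t ->
  (Zstate T0 TS u (nseq c 0) j e t).1 = queue_state T0 TS n (Wt T0 TS j (nseq c 0) n) t.
Proof.
move=> uj jn; rewrite -(Wq_zero_Wt uj jn) => ht.
by apply: (Zstate_queue_state hA hS) => //; rewrite ?size_nseq ?(le_trans uj) ?leT //; lia.
Qed.

Lemma Zstate_vacation k n e t : k <= n ->
  T0 n + head 0 (Wt T0 TS k (Wv T0 TS k) n) <= t ->
  (Zstate T0 TS (T0 k) (sortR (Uvec TS (T0 k))) (k - Qv (T0 k) + 1) e t).1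
  = queue_state T0 TS n (Wt T0 TS k (Wv T0 TS k) n) t.
Proof.
move=> kn; rewrite -(Wq_vacation_Wt kn) => ht; have := Qv_arrival_ge1 hA hS hN hQ k.
move=> Q1; apply: (Zstate_queue_state hA hS) => //; last by rewrite leT.
  by rewrite size_sortR Uvec_nextpts size_map size_nextpts.
lia.
Qed.

Section Coupled.
Variables (k n : int) (t : R).
Hypotheses (kn : k <= n) (coupled : Wt T0 TS k (Wv T0 TS k) n = Wt T0 TS k (nseq c 0) n)
  (ht : T0 n + head 0 (Wt T0 TS k (Wv T0 TS k) n) <= t).

Lemma Zstate_vacation_coupled :
  Zstate T0 TS (T0 k) (sortR (Uvec TS (T0 k))) (k - Qv (T0 k) + 1) 0 t
  = Zstate T0 TS (T0 k) (nseq c 0) k 0 t.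
Proof.
apply: injective_projections => //.
by rewrite (Zstate_vacation _ kn ht) (Zstate_zero _ (lexx _) kn) -?coupled.
Qed.

Lemma Zemp_coupled u : u < T0 k -> Zemp T0 TS u t = Zstate T0 TS (T0 k) (nseq c 0) k 0 t.
Proof.
move=> uk; set k' := lastidx T0 u + 1.
have k'k : k' <= k by rewrite /k' lezD1 (lastidx_lt hT0 uk).
have uk' : u <= T0 k' by rewrite ltW // lastidx_gt.
have ht0 : T0 n + head 0 (Wt T0 TS k (nseq c 0) n) <= t by rewrite -coupled.
have tk : T0 k <= T0 (lastidx T0 t).
  by rewrite leT // (le_trans kn) // lastidx_ge // (le_trans _ ht0) // lerDl head_Wt0_ge0.
apply: injective_projections.
  rewrite (Zstate_zero _ uk' (le_trans k'k kn)) ?(Zstate_zero _ (lexx _) kn) //.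
    by rewrite (Wt0_coupled hc hA hS hN hQ kn (lexx _) k'k coupled).
  by rewrite (Wt0_coupled hc hA hS hN hQ kn (lexx _) k'k coupled).
by rewrite /Zemp (Zstate_elapsed _ _ _ (lt_le_trans uk tk)) Zstate_elapsed0.
Qed.

Lemma Z_to_coupled : Z_to T0 TS t (Zstate T0 TS (T0 k) (nseq c 0) k 0 t).
Proof.
have early u : u <= T0 k - 1 -> Zemp T0 TS u t = Zstate T0 TS (T0 k) (nseq c 0) k 0 t.
  by move=> hu; apply: Zemp_coupled; rewrite (le_lt_trans hu) // gtrBl.
split; first by exists (T0 k - 1) => u /early ->.
move=> eps eps_gt0; exists (T0 k - 1) => u /early ->.
by rewrite subrr normr0 eps_gt0; split=> // p _; rewrite subrr normr0.
Qed.

End Coupled.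

End Coupling.

Theorem proposition2 (R : realType) (c : nat) (T0 : int -> R)
    (TS : 'I_c -> int -> R) (k n : int) :
  (0 < c)%N ->
  arrivals_ok T0 -> servers_ok TS -> no_coincidence T0 TS -> Qv_finite T0 TS ->
  k <= -1 -> k <= n -> n <= -1 ->
  Wt T0 TS k (Wv T0 TS k) n = Wt T0 TS k (nseq c 0) n ->
  (forall m : int, n <= m ->
     Wt T0 TS k (Wv T0 TS k) m = Wt T0 TS k (nseq c 0) m /\
     Wlim_to T0 TS m (Wt T0 TS k (nseq c 0) m)) /\
  (forall t : R, T0 n + head 0 (Wt T0 TS k (Wv T0 TS k) n) <= t ->
     Zstate T0 TS (T0 k) (sortR (Uvec TS (T0 k))) (k - Qv T0 TS (T0 k) + 1) 0 t
       = Zstate T0 TS (T0 k) (nseq c 0) k 0 t /\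
     Z_to T0 TS t (Zstate T0 TS (T0 k) (nseq c 0) k 0 t)).
Proof.
move=> hc hA hS hN hQ _ kn _ coupled; split.
  exact: (Wt_coupled_limit hc hA hS hN hQ kn coupled).
move=> t ht; split.
  exact: (Zstate_vacation_coupled hc hA hS hN hQ kn coupled ht).
exact: (Z_to_coupled hc hA hS hN hQ kn coupled ht).
Qed.
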